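(* Let $n,q,L$ be positive integers and $r\in[0,1)$ with $rn\in\mathbb{N}$. Let $V=\bigcup_{i=1}^n V_i$ with $V_i=\{(i,a):a\in[q]\}$, and let $H=(V,E)$ be an $n$-uniform $n$-partite hypergraph with these parts which is $(n+(L+1)rn,\,L+1)$-sparse. Then the code $C_H=\{\psi(e):e\in E\}\subseteq[q]^n$ is $(r,L)$ list-decodable.
   Context: A hypergraph is $n$-uniform if all edges have size $n$; $n$-partite with parts $V_1,\dots,V_n$ if every edge meets each $V_i$ in exactly one vertex. For an edge $e=\{(i,x_i):i\in[n]\}$, $\psi(e)=(x_1,\dots,x_n)\in[q]^n$. An $n$-uniform hypergraph is $(v,e)$-sparse if any $e$ distinct edges $A_1,\dots,A_e$ satisfy $|\bigcup_{i=1}^e A_i|>v$. A code $C\subseteq[q]^n$ is $(r,L)$ list-decodable if every Hamming ball of radius $rn$ in $[q]^n$ contains at most $L$ codewords. *)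

From mathcomp Require Import all_boot all_order all_algebra.
Set Implicit Arguments. Unset Strict Implicit. Unset Printing Implicit Defensive.
Import Order.TTheory GRing.Theory Num.Theory.

(* Vertices of the n-partite hypergraph: V_i = {(i,a) : a in [q]}, i.e. the
   vertex set V = 'I_n * 'I_q (the pair (i,a) is the a-th vertex of part i). *)
Definition vertex (n q : nat) := ('I_n * 'I_q)%type.

(* A hypergraph on V is given by its edge set E, a set of subsets of V. *)

Definition uniform (n q : nat) (E : {set {set vertex n q}}) : Prop :=
  forall e, e \in E -> #|e| = n.

Definition partite (n q : nat) (E : {set {set vertex n q}}) : Prop :=
  forall e, e \in E -> forall i : 'I_n, #|[set a : 'I_q | (i, a) \in e]| = 1.

Definition sparse (n q : nat) (E : {set {set vertex n q}}) (v k : nat) : Prop :=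
  forall S : {set {set vertex n q}}, S \subset E -> #|S| = k ->
    v < #|\bigcup_(A in S) A|.

Definition word (n q : nat) := {ffun 'I_n -> 'I_q}.

(* psi(e) = w  iff  e = {(i, w_i) : i in [n]} meets V_i at (i, w i) for all i
   (for an edge of an n-partite hypergraph this determines w uniquely). *)
Definition psi_is (n q : nat) (e : {set vertex n q}) (w : word n q) : bool :=
  [forall i, (i, w i) \in e].

Definition code_of (n q : nat) (E : {set {set vertex n q}}) : {set word n q} :=
  [set w | [exists e in E, psi_is e w]].

Definition hamming (n q : nat) (x y : word n q) : nat := #|[set i | x i != y i]|.

Definition list_decodable (R : realFieldType) (n q : nat) (C : {set word n q})
    (r : R) (L : nat) : Prop :=
  forall x : word n q,
    (#|[set c in C | ((hamming x c)%:R <= r * n%:R)%R]| <= L)%N.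

(* Suppose L + 1 codewords c_1, ..., c_(L+1) lie within distance t = r n of a
   word x.  Every c_j is psi of an edge, namely of its graph
   {(i, c_j i) : i in [n]}, and that edge lies inside the graph of x except for
   the d(x, c_j) <= t vertices where c_j differs from x.  Hence the union of
   these L + 1 edges has at most n + (L + 1) t vertices, contradicting
   (n + (L + 1) t, L + 1)-sparseness. *)
From mathcomp Require Import all_boot all_order all_algebra.
Import Order.TTheory GRing.Theory Num.Theory.

Lemma leq_card_bigcup {T I : finType} (P : {pred I}) (F : I -> {set T}) :
  #|\bigcup_(i in P) F i| <= \sum_(i in P) #|F i|.
Proof.
elim/big_rec2: _ => [|i m U _ leUm]; first by rewrite cards0.
by rewrite (leq_trans (leq_card_setU (F i) U).1) ?leq_add2l.
Qed.

Lemma leq_card_bigcup_setD {T : finType} (X : {set T}) (S : {set {set T}}) :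
  #|\bigcup_(A in S) A| <= #|X| + \sum_(A in S) #|A :\: X|.
Proof.
have sub_bigcup : \bigcup_(A in S) A \subset X :|: \bigcup_(A in S) (A :\: X).
  apply/subsetP => v /bigcupP [A AS vA]; rewrite !inE.
  case: (boolP (v \in X)) => //= vNX.
  by apply/bigcupP; exists A; rewrite ?inE ?vNX.
rewrite (leq_trans (subset_leq_card sub_bigcup)) //.
by rewrite (leq_trans (leq_card_setU _ _).1) ?leq_add2l ?leq_card_bigcup.
Qed.

Lemma exists_subset_card {T : finType} (A : {set T}) k :
  k <= #|A| -> exists2 B : {set T}, B \subset A & #|B| = k.
Proof.
case/card_geqP => s [uniq_s size_s sub_s]; exists [set x in s].
  by apply/subsetP => x; rewrite inE => /sub_s.
by rewrite cardsE (card_uniqP uniq_s).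
Qed.

Section WordEdge.

Variables n q : nat.

Definition word_edge (w : word n q) : {set vertex n q} := [set (i, w i) | i : 'I_n].

Lemma mem_word_edge (w : word n q) i a : ((i, a) \in word_edge w) = (w i == a).
Proof.
by apply/imsetP/eqP => [[j _ [-> ->]] | <-] //; exists i.
Qed.

Lemma word_edge_inj : injective word_edge.
Proof.
move=> w w' eq_ww'; apply/ffunP => i; apply/eqP.
by rewrite -mem_word_edge eq_ww' mem_word_edge.
Qed.

Lemma card_word_edge (w : word n q) : #|word_edge w| = n.
Proof. by rewrite card_imset ?card_ord // => i j []. Qed.

Lemma card_word_edgeD (x w : word n q) :
  #|word_edge w :\: word_edge x| = hamming x w.
Proof.
have -> : word_edge w :\: word_edge x = [set (i, w i) | i in [set i | x i != w i]].
  apply/setP => -[i a]; rewrite !inE !mem_word_edge.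
  apply/andP/imsetP => [[xNa /eqP wa] | [j + [-> ->]]]; last by rewrite inE eqxx.
  by exists i; rewrite ?inE wa.
by rewrite card_imset // => i j [].
Qed.

Lemma mem_code_of (E : {set {set vertex n q}}) (w : word n q) :
  uniform E -> (w \in code_of E) = (word_edge w \in E).
Proof.
move=> unifE; rewrite inE; apply/existsP/idP => [[e /andP [eE /forallP we]] | wE].
  suff -> : word_edge w = e by [].
  apply/eqP; rewrite eqEcard card_word_edge unifE // leqnn andbT.
  by apply/subsetP => _ /imsetP [i _ ->].
by exists (word_edge w); rewrite wE; apply/forallP => i; rewrite mem_word_edge.
Qed.

Lemma sparse_card_ball (E : {set {set vertex n q}}) k t (x : word n q) :
  uniform E -> sparse E (n + k * t) k ->
  #|[set c in code_of E | hamming x c <= t]| < k.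
Proof.
move=> unifE sparseE; rewrite ltnNge; apply/negP.
case/exists_subset_card => W /subsetP W_ball cardW.
have W_E : word_edge @: W \subset E.
  apply/subsetP => _ /imsetP [w /W_ball + ->].
  by rewrite inE mem_code_of // => /andP [].
have := sparseE _ W_E; rewrite card_imset ?cardW; last exact: word_edge_inj.
move/(_ erefl); apply/negP; rewrite -leqNgt.
apply: (leq_trans (leq_card_bigcup_setD (word_edge x) _)).
rewrite card_word_edge leq_add2l big_imset /=; last by move=> ? ? _ _ /word_edge_inj.
rewrite -cardW -sum_nat_const; apply: leq_sum => w /W_ball.
by rewrite inE card_word_edgeD => /andP [].
Qed.

End WordEdge.

Theorem lemma4p5 (R : realFieldType) (n q L : nat)
    (hn : (0 < n)%N) (hq : (0 < q)%N) (hL : (0 < L)%N)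
    (r : R) (hr0 : (0 <= r)%R) (hr1 : (r < 1)%R)
    (t : nat) (ht : (r * n%:R = t%:R)%R)
    (E : {set {set vertex n q}})
    (Hunif : uniform E) (Hpart : partite E)
    (Hsparse : sparse E (n + L.+1 * t) L.+1) :
  list_decodable (code_of E) r L.
Proof.
move=> x; rewrite ht.
under eq_finset => c do rewrite ler_nat.
by rewrite -ltnS; apply: sparse_card_ball.
Qed.
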